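(* Let $q$ be a prime power, $v\ge2$, and let $u,m\ge0$ and $\Delta\ge1$ be integers. Let $\mathcal{C}$ be a set of points of $\mathrm{PG}(v-1,q)$ with $|\mathcal{C}|=u+m\Delta$ such that every hyperplane $H$ satisfies $|\mathcal{C}\cap H|\in\{u,u+\Delta,\dots,u+m\Delta\}$. Then $u<\frac{m\Delta}{q-1}$ or $u=m=0$.
   Context: $\mathrm{PG}(v-1,q)$ is the set of $1$-dimensional subspaces (points) of $\mathbb{F}_q^v$; hyperplanes are the $(v-1)$-dimensional subspaces of $\mathbb{F}_q^v$, and $\mathcal{C}\cap H$ is the set of points of $\mathcal{C}$ contained in $H$. *)

From mathcomp Require Import all_boot all_algebra all_field.
Set Implicit Arguments. Unset Strict Implicit. Unset Printing Implicit Defensive.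
Import GRing.Theory Num.Theory.

(* Subspaces of F^v (row vectors 'rV[F]_v) are represented canonically by
   square matrices A with <<A>>%MS = A (the canonical generator of the row
   space, mxalgebra's genmx); the subspace is the row space of A and its
   dimension is \rank A. *)
Definition is_subspace (F : fieldType) (v : nat) (A : 'M[F]_v) : bool :=
  (<<A>>%MS == A).

Definition PG_point (F : fieldType) (v : nat) (A : 'M[F]_v) : bool :=
  is_subspace A && (\rank A == 1%N).

Definition PG_hyperplane (F : fieldType) (v : nat) (A : 'M[F]_v) : bool :=
  is_subspace A && (\rank A == v.-1).

Definition pts_in (F : finFieldType) (v : nat) (C : {set 'M[F]_v}) (H : 'M[F]_v)
  : {set 'M[F]_v} := [set P in C | (P <= H)%MS].

From mathcomp Require Import all_boot all_algebra all_field.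
From mathcomp Require Import mxabelem zify.
Set Implicit Arguments. Unset Strict Implicit. Unset Printing Implicit Defensive.
Import GRing.Theory Num.Theory.

(* Double count the incidences between the points of C and the hyperplanes
   ker w, w ranging over the q^v - 1 nonzero vectors (each hyperplane is hit
   q - 1 times).  Every hyperplane meets C in at least u points, and every
   point is annihilated by a (v-1)-dimensional space of vectors, so it lies
   on exactly q^(v-1) - 1 of them.  Hence
   u (q^v - 1) <= (u + m Delta) (q^(v-1) - 1), i.e.
   u (q - 1) q^(v-1) <= m Delta (q^(v-1) - 1), which forces u (q - 1) < m Delta
   unless u = m Delta = 0. *)

Lemma card_sep_sum (T : finType) (A : {set T}) (P : pred T) :
  #|[set x in A | P x]| = (\sum_(x in A) P x)%N.
Proof.
rewrite -sum1_card big_mkcond [RHS]big_mkcond; apply: eq_bigr => x _.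
by rewrite !inE; case: (x \in A); case: (P x).
Qed.

Lemma sum_card_incidence (I J : finType) (A : {set I}) (B : {set J})
    (r : I -> J -> bool) :
  (\sum_(i in A) #|[set j in B | r i j]|)%N = (\sum_(j in B) #|[set i in A | r i j]|)%N.
Proof.
under eq_bigr do rewrite card_sep_sum.
by rewrite exchange_big; apply: eq_bigr => j _; rewrite card_sep_sum.
Qed.

Lemma double_count_bound (q k u n : nat) : (1 < q)%N -> (0 < k)%N ->
  (u * (q * k).-1 <= (u + n) * k.-1)%N -> (u * q.-1 < n)%N \/ (u = 0 /\ n = 0)%N.
Proof.
case: q => [|[|q]] // _; case: k => // k _ le_count.
have le_scaled : (u * q.+1 * k.+1 <= n * k)%N.
  by move: le_count; rewrite -!subn1; nia.
by have [n0|n_gt0] := posnP n; [right | left]; nia.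
Qed.

Lemma sub_kermx_trC (F : fieldType) m k n (P : 'M[F]_(m, n)) (w : 'M[F]_(k, n)) :
  (P <= kermx w^T)%MS = (w <= kermx P^T)%MS.
Proof. by rewrite !sub_kermx -(inj_eq (@trmx_inj _ _ _)) trmx_mul trmxK trmx0. Qed.

Lemma PG_hyperplane_kermx (F : fieldType) v (w : 'rV[F]_v) :
  (w != 0)%R -> PG_hyperplane <<kermx w^T>>%MS.
Proof.
move=> w_neq0; rewrite /PG_hyperplane /is_subspace genmx_id eqxx /=.
by rewrite mxrank_gen mxrank_ker mxrank_tr rank_rV w_neq0 subn1.
Qed.

Section Counting.
Variable F : finFieldType.

Lemma card_nonzero_annihilators m n (P : 'M[F]_(m, n)) :
  #|[set w : 'rV_n | (w != 0)%R && (P <= kermx w^T)%MS]| = (#|F| ^ (n - \rank P)).-1.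
Proof.
have -> : [set w : 'rV_n | (w != 0)%R && (P <= kermx w^T)%MS] = rowg (kermx P^T) :\ 0%R.
  by apply/setP => w; rewrite !inE sub_kermx_trC.
by rewrite -(mxrank_tr P) -mxrank_ker -card_rowg (cardsD1 0%R (rowg _)) inE sub0mx.
Qed.

Lemma card_kermx_containing_point v (P : 'M[F]_v) : \rank P = 1%N ->
  #|[set w : 'rV_v in [set~ 0%R] | (P <= <<kermx w^T>>)%MS]| = (#|F| ^ v.-1).-1.
Proof.
move=> rank_P; rewrite (_ : v.-1 = v - \rank P)%N; last by rewrite rank_P subn1.
by rewrite -card_nonzero_annihilators; apply: eq_card => w; rewrite !inE genmxE.
Qed.

Lemma card_nonzero_rV n : #|[set~ 0%R : 'rV[F]_n]| = (#|F| ^ n).-1.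
Proof. by rewrite cardsC1 card_mx mul1n. Qed.

End Counting.

Theorem corollary5p4 (F : finFieldType) (q v u m Delta : nat) :
  #|F| = q -> (2 <= v)%N -> (1 <= Delta)%N ->
  forall C : {set 'M[F]_v},
    (forall P, P \in C -> PG_point P) ->
    #|C| = (u + m * Delta)%N ->
    (forall H : 'M[F]_v, PG_hyperplane H ->
       exists2 i : nat, (i <= m)%N & #|pts_in C H| = (u + i * Delta)%N) ->
    ((u%:R : rat) < (m * Delta)%:R / (q.-1)%:R)%R \/ (u = 0%N /\ m = 0%N).
Proof.
move=> Fq v_ge2 Delta_gt0 C C_points C_card C_hyp.
have q_gt1 : (1 < q)%N by rewrite -Fq finNzRing_gt1.
pose S := (\sum_(w in [set~ 0%R : 'rV[F]_v]) #|pts_in C <<kermx w^T>>%MS|)%N.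
have S_ge : (u * (q ^ v).-1 <= S)%N.
  rewrite -Fq -card_nonzero_rV mulnC -sum_nat_const; apply: leq_sum => w.
  by rewrite in_setC1 => /PG_hyperplane_kermx/C_hyp[i _ ->]; exact: leq_addr.
have S_eq : S = (#|C| * (q ^ v.-1).-1)%N.
  rewrite /S /pts_in sum_card_incidence -sum_nat_const; apply: eq_bigr => P /C_points.
  by case/andP=> _ /eqP /card_kermx_containing_point ->; rewrite Fq.
have : (u * (q * q ^ v.-1).-1 <= (u + m * Delta) * (q ^ v.-1).-1)%N.
  by rewrite -expnS prednK ?(ltn_trans _ v_ge2) // -C_card -S_eq.
case/double_count_bound; rewrite ?expn_gt0 ?(ltnW q_gt1) //.
  by move=> lt_u; left; rewrite ltr_pdivlMr ?ltr0n -?natrM ?ltr_nat // -subn1 subn_gt0.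
by move=> [-> no_excess]; right; split => //; nia.
Qed.
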